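(* Let $N \ge 1$ be an integer and let $(X_1, X_2, \dots, X_N)$ be a time-homogeneous Markov chain on the two-state space $\{S_0, S_1\}$ with initial distribution $\mathbb{P}(X_1 = S_0) = p_0$, $\mathbb{P}(X_1 = S_1) = p_1$ (where $p_0,p_1\ge 0$, $p_0+p_1=1$) and transition probabilities $p_{ij} = \mathbb{P}(X_{t+1} = S_j \mid X_t = S_i)$ for $i,j \in \{0,1\}$ (so $p_{00}+p_{01}=1$ and $p_{10}+p_{11}=1$). Let $N_1 = \#\{t \in \{1,\dots,N\} : X_t = S_1\}$ be the number of visits to $S_1$ (the initial state counts as a visit). Then for every integer $k$ with $0 \le k \le N$, $$\mathbb{P}(N_1 = k) = p_1\, \mathbb{P}_1(k,N \mid S_1) + p_0\, \mathbb{P}_2(k,N \mid S_0),$$ where $$\mathbb{P}_1(k,N\mid S_1) = \begin{cases} 0 & k=0,\\[2pt] \displaystyle\sum_{j=1}^{c_1(k,N)} \binom{k-1}{j-1} p_{11}^{k-j} p_{10}^{j} \binom{N-k-1}{j-1} p_{01}^{j-1} p_{00}^{N-k-j} + \sum_{j=1}^{c_2(k,N)} \binom{k-1}{j} p_{11}^{k-j-1} p_{10}^{j} \binom{N-k-1}{j-1} p_{01}^{j} p_{00}^{N-k-j} & 0<k<N,\\[2pt] p_{11}^{N-1} & k=N,\end{cases}$$ $$\mathbb{P}_2(k,N\mid S_0) = \begin{cases} p_{00}^{N-1} & k=0,\\[2pt] \displaystyle\sum_{j=1}^{c_1(k,N)} \binom{k-1}{j-1} p_{11}^{k-j} p_{10}^{j-1}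 \binom{N-k-1}{j-1} p_{01}^{j} p_{00}^{N-k-j} + \sum_{j=1}^{c_3(k,N)} \binom{k-1}{j-1} p_{11}^{k-j} p_{10}^{j} \binom{N-k-1}{j} p_{01}^{j} p_{00}^{N-k-j-1} & 0<k<N,\\[2pt] 0 & k=N,\end{cases}$$ with $c_1(k,N) = \min(k, N-k)$, $c_2(k,N) = \min(k-1, N-k)$, $c_3(k,N) = \min(k, N-k-1)$ (an empty sum is $0$, and $0^0 = 1$).
   Context: The chain consists of $N$ states $X_1,\dots,X_N$: the initial state $X_1$ is drawn from $(p_0,p_1)$ and is followed by $N-1$ transitions. $\mathbb{P}_1(k,N\mid S_1)$ is the probability that $N_1=k$ given $X_1=S_1$, and $\mathbb{P}_2(k,N\mid S_0)$ is the probability that $N_1=k$ given $X_1=S_0$; the displayed formulas give their explicit values. *)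

(* States: false = S_0, true = S_1. *)
From mathcomp Require Import all_boot all_order all_algebra.
Set Implicit Arguments. Unset Strict Implicit. Unset Printing Implicit Defensive.
Import Order.TTheory GRing.Theory Num.Theory.
Local Open Scope ring_scope.

Section MC.
Variable R : realFieldType.
Variables (p0 p1 p00 p01 p10 p11 : R).

Definition init_prob (b : bool) : R := if b then p1 else p0.

Definition trans_prob (a b : bool) : R :=
  match a, b with
  | false, false => p00 | false, true => p01
  | true, false => p10 | true, true => p11
  end.

Fixpoint trans_path (a : bool) (s : seq bool) : R :=
  if s is b :: t then trans_prob a b * trans_path b t else 1.

Definition path_prob (s : seq bool) : R :=
  if s is a :: t then init_prob a * trans_path a t else 1.

Definition prob_N1 (N k : nat) : R :=
  \sum_(x : N.-tuple bool | count id x == k) path_prob x.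

Definition c1 (k N : nat) : nat := minn k (N - k).
Definition c2 (k N : nat) : nat := minn (k - 1) (N - k).
Definition c3 (k N : nat) : nat := minn k (N - k - 1).

Definition P1 (k N : nat) : R :=
  if k == 0%N then 0
  else if k == N then p11 ^+ (N - 1)
  else \sum_(1 <= j < (c1 k N).+1)
         ('C(k - 1, j - 1))%:R * p11 ^+ (k - j) * p10 ^+ j *
         ('C(N - k - 1, j - 1))%:R * p01 ^+ (j - 1) * p00 ^+ (N - k - j)
     + \sum_(1 <= j < (c2 k N).+1)
         ('C(k - 1, j))%:R * p11 ^+ (k - j - 1) * p10 ^+ j *
         ('C(N - k - 1, j - 1))%:R * p01 ^+ j * p00 ^+ (N - k - j).

Definition P2 (k N : nat) : R :=
  if k == 0%N then p00 ^+ (N - 1)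
  else if k == N then 0
  else \sum_(1 <= j < (c1 k N).+1)
         ('C(k - 1, j - 1))%:R * p11 ^+ (k - j) * p10 ^+ (j - 1) *
         ('C(N - k - 1, j - 1))%:R * p01 ^+ j * p00 ^+ (N - k - j)
     + \sum_(1 <= j < (c3 k N).+1)
         ('C(k - 1, j - 1))%:R * p11 ^+ (k - j) * p10 ^+ j *
         ('C(N - k - 1, j))%:R * p01 ^+ j * p00 ^+ (N - k - j - 1).

End MC.

From mathcomp Require Import all_boot all_order all_algebra.
From mathcomp Require Import ring zify.
Set Implicit Arguments. Unset Strict Implicit. Unset Printing Implicit Defensive.
Import Order.TTheory GRing.Theory Num.Theory.
Local Open Scope ring_scope.

(* Conditioning on the first state reduces P(N_1 = k) to [visit_prob a n k], the weight of the
   state sequences of length n with k visits to S_1 that follow a given state a.  A first-step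
   decomposition gives a recursion for these weights; the paper's formulas, grouped by the number
   i of round trips S_1 -> S_0 -> S_1 (each weighing p10 * p01), satisfy the same recursion by
   Pascal's rule.  The identity is polynomial in the parameters. *)

Definition bweight (R : comPzRingType) (x : R) (n j : nat) : R := 'C(n, j)%:R * x ^+ (n - j).

Section BinomialWeight.
Variable R : comPzRingType.
Implicit Type x : R.

Lemma bweight0 x n : bweight x n 0 = x ^+ n.
Proof. by rewrite /bweight bin0 subn0 mul1r. Qed.

Lemma bweight_small x n j : (n < j)%N -> bweight x n j = 0.
Proof. by move=> ltnj; rewrite /bweight bin_small // mul0r. Qed.

Lemma bweightSS x n j : bweight x n.+1 j.+1 = x * bweight x n j.+1 + bweight x n j.
Proof.
rewrite /bweight binS natrD mulrDl subSS; congr (_ + _).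
have [ltjn | lenj] := ltnP j n; last by rewrite bin_small ?ltnS // !mul0r mulr0.
by rewrite -{1}(subnSK ltjn) exprS mulrCA.
Qed.

End BinomialWeight.

(* The bound [B] is only a truncation: it is irrelevant once it is large (bsum_widen). *)
Definition bsum (R : comPzRingType) (x y z : R) (B a b k m : nat) : R :=
  \sum_(i < B) bweight x k (i + a) * bweight y m (i + b) * z ^+ i.

Section BinomialSum.
Variables (R : comPzRingType) (x y z : R).

Lemma bsumC B a b k m : bsum x y z B a b k m = bsum y x z B b a m k.
Proof. by apply: eq_bigr => i _; rewrite [_ * bweight _ _ _]mulrC. Qed.

Lemma bsum_widen B B' a b k m : (B <= B')%N -> (k < B + a)%N || (m < B + b)%N ->
  bsum x y z B' a b k m = bsum x y z B a b k m.
Proof.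
move=> leBB' small; rewrite /bsum -(subnKC leBB') big_split_ord /=.
rewrite [X in _ + X]big1 ?addr0 // => i _.
have [ltk | ltm] := orP small.
  by rewrite (@bweight_small _ x) ?mul0r //; lia.
by rewrite (@bweight_small _ y) ?mulr0 ?mul0r //; lia.
Qed.

Lemma bsumSshift B a b k m :
  bsum x y z B a.+1 b k.+1 m = x * bsum x y z B a.+1 b k m + bsum x y z B a b k m.
Proof.
rewrite /bsum big_distrr -big_split; apply: eq_bigr => i _ /=.
by rewrite addnS bweightSS; ring.
Qed.

Lemma bsumS B b k m : (k < B)%N ->
  bsum x y z B.+1 0 b k.+1 m = x * bsum x y z B.+1 0 b k m + z * bsum x y z B.+1 0 b.+1 k m.
Proof.
move=> ltkB; rewrite /bsum [in X in z * X]big_ord_recr /= addn0 bweight_small //.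
rewrite !mul0r addr0 !big_ord_recl /= !addn0 !bweight0 exprS.
under eq_bigr do rewrite /bump /= add1n addn0 bweightSS.
under [in X in x * (_ + X)]eq_bigr do rewrite /bump /= add1n addn0.
rewrite mulrDr !big_distrr -addrA -big_split /=; congr (_ + _); first by ring.
by apply: eq_bigr => i _; rewrite addn0 addnS addSn exprS; ring.
Qed.

Lemma bsumr0 B k : bsum x y z B.+1 0 0 k 0 = x ^+ k.
Proof.
rewrite /bsum big_ord_recl big1 /= ?bweight0 ?expr0 ?mulr1 ?addr0 // => i _.
by rewrite [bweight y _ _]bweight_small ?mulr0 ?mul0r.
Qed.

Lemma bsumr0_shift B a b k : bsum x y z B a b.+1 k 0 = 0.
Proof. by rewrite /bsum big1 // => i _; rewrite [bweight y _ _]bweight_small ?addnS ?mulr0 ?mul0r. Qed.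

End BinomialSum.

Section BinomialSumTranspose.
Variables (R : comPzRingType) (x y z : R).

Lemma bsum0l B m : bsum x y z B.+1 0 0 0 m = y ^+ m.
Proof. by rewrite bsumC bsumr0. Qed.

Lemma bsum0l_shift B a b m : bsum x y z B a.+1 b 0 m = 0.
Proof. by rewrite bsumC bsumr0_shift. Qed.

Lemma bsumSr B a k m : (m < B)%N ->
  bsum x y z B.+1 a 0 k m.+1 = y * bsum x y z B.+1 a 0 k m + z * bsum x y z B.+1 a.+1 0 k m.
Proof. by move=> ltmB; rewrite !(bsumC x y) bsumS. Qed.

Lemma bsumSr_shift B a b k m :
  bsum x y z B a b.+1 k m.+1 = y * bsum x y z B a b.+1 k m + bsum x y z B a b k m.
Proof. by rewrite !(bsumC x y) bsumSshift. Qed.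

Lemma big_nat1_bsum (F : nat -> R) e c B a b k m :
  (c <= B)%N -> (k < c + a)%N || (m < c + b)%N ->
  (forall i, F i.+1 = e * (bweight x k (i + a) * bweight y m (i + b) * z ^+ i)) ->
  \sum_(1 <= j < c.+1) F j = e * bsum x y z B a b k m.
Proof.
move=> leB small FE; rewrite (bsum_widen _ _ _ leB small) /bsum big_add1 /= big_mkord.
by rewrite big_distrr; apply: eq_bigr => i _; exact: FE.
Qed.

End BinomialSumTranspose.

Lemma big_tuple_cons (R : nmodType) n (P : pred (n.+1.-tuple bool)) (F : n.+1.-tuple bool -> R) :
  \sum_(s : n.+1.-tuple bool | P s) F s =
  \sum_(b : bool) \sum_(t : n.-tuple bool | P [tuple of b :: t]) F [tuple of b :: t].
Proof.
rewrite pair_big_dep /= (reindex (fun bt : bool * n.-tuple bool => [tuple of bt.1 :: bt.2])) //=.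
exists (fun s : n.+1.-tuple bool => (thead s, [tuple of behead s])).
  by case=> b t _ /=; rewrite theadE; congr pair; apply: val_inj.
by move=> s _ /=; rewrite [RHS]tuple_eta.
Qed.

Section TwoStateChain.
Variables (R : realFieldType) (p00 p01 p10 p11 : R).
Local Notation p := (trans_prob p00 p01 p10 p11).

Definition visit_prob (a : bool) (n k : nat) : R :=
  \sum_(s : n.-tuple bool | count id s == k) trans_path p00 p01 p10 p11 a s.

Lemma visit_probS a n k : visit_prob a n.+1 k =
  p a false * visit_prob false n k + p a true * (if k is k'.+1 then visit_prob true n k' else 0).
Proof.
rewrite /visit_prob big_tuple_cons big_bool /= addrC big_distrr; congr (_ + _).
case: k => [|k] /=; first by rewrite big_pred0 ?mulr0.
by rewrite big_distrr.
Qed.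

Lemma visit_prob0 a k : visit_prob a 0 k = (k == 0)%:R.
Proof.
rewrite /visit_prob; case: k => [|k] /=; last by rewrite big_pred0 // => s; rewrite tuple0.
by rewrite (big_pred1 [tuple]) // => s; rewrite tuple0.
Qed.

Lemma visit_prob_gt a n k : (n < k)%N -> visit_prob a n k = 0.
Proof.
elim: n a k => [|n IHn] a k ltnk; first by rewrite visit_prob0; case: k ltnk.
rewrite visit_probS IHn 1?ltnW //; case: k ltnk => // k ltnk.
by rewrite IHn // !mulr0 addr0.
Qed.

Lemma visit_prob_false0 n : visit_prob false n 0 = p00 ^+ n.
Proof. by elim: n => [|n IHn]; rewrite ?visit_prob0 // visit_probS IHn mulr0 addr0 exprS. Qed.

Lemma visit_prob_truenn n : visit_prob true n n = p11 ^+ n.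
Proof.
elim: n => [|n IHn]; first by rewrite visit_prob0.
by rewrite visit_probS IHn visit_prob_gt // mulr0 add0r exprS.
Qed.

Local Notation S B a b k m := (bsum p11 p00 (p10 * p01) B a b k m).

Definition closed_from1 B k m := p10 * S B 0 0 k m + p10 * p01 * S B 1 0 k m.
Definition closed_from0 B k m := p01 * S B 0 0 k m + p10 * p01 * S B 0 1 k m.

Lemma visit_prob_closed B k :
  (forall m, (k + m <= B)%N -> visit_prob true (k + m).+1 k = closed_from1 B.+1 k m) /\
  (forall m, (k + m <= B)%N -> visit_prob false (k + m).+1 k.+1 = closed_from0 B.+1 k m).
Proof.
have from0_of_from1 k' :
    (forall m, (k' + m <= B)%N -> visit_prob true (k' + m).+1 k' = closed_from1 B.+1 k' m) ->
    forall m, (k' + m <= B)%N -> visit_prob false (k' + m).+1 k'.+1 = closed_from0 B.+1 k' m.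
  move=> from1; elim=> [|m IHm] le_kmB.
    rewrite addn0 visit_probS visit_prob_gt // visit_prob_truenn /closed_from0.
    by rewrite /= bsumr0 bsumr0_shift; ring.
  have le_kmB' : (k' + m <= B)%N by lia.
  rewrite addnS visit_probS /= IHm // from1 // /closed_from0 /closed_from1.
  by rewrite bsumSr ?bsumSr_shift; [ring | lia].
elim: k => [|k [IHfrom1 IHfrom0]].
  split; last apply: from0_of_from1; move=> m _;
    by rewrite visit_probS visit_prob_false0 /closed_from1 bsum0l bsum0l_shift /=; ring.
suff from1 : forall m, (k.+1 + m <= B)%N ->
    visit_prob true (k.+1 + m).+1 k.+1 = closed_from1 B.+1 k.+1 m.
  by split; last exact: from0_of_from1.
move=> m le_kmB; have le_kmB' : (k + m <= B)%N by lia.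
rewrite addSn visit_probS /= IHfrom0 // IHfrom1 // /closed_from0 /closed_from1.
by rewrite bsumS ?bsumSshift; [ring | lia].
Qed.

Lemma prob_N1_visit_prob (p0 p1 : R) n k : prob_N1 p0 p1 p00 p01 p10 p11 n.+1 k =
  p1 * (if k is k'.+1 then visit_prob true n k' else 0) + p0 * visit_prob false n k.
Proof.
rewrite /prob_N1 big_tuple_cons big_bool /= [in RHS]big_distrr; congr (_ + _).
case: k => [|k] /=; first by rewrite big_pred0 ?mulr0.
by rewrite big_distrr.
Qed.

Lemma P1_closed k m : P1 p00 p01 p10 p11 k.+1 (k + m).+2 = closed_from1 (k + m).+1 k m.
Proof.
rewrite /P1 /c1 /c2 /closed_from1 /=.
have -> : ((k + m).+2 - k.+1 = m.+1)%N by lia.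
rewrite !subn1 /= ifN; last lia.
congr (_ + _); apply: big_nat1_bsum; try lia; move=> i; rewrite /bweight.
  all: rewrite ?addn0 ?addn1 !subSS ?subn0 ?subn1 ?subnS exprMn !exprS; ring.
Qed.

Lemma P2_closed k m : P2 p00 p01 p10 p11 k.+1 (k + m).+2 = closed_from0 (k + m).+1 k m.
Proof.
rewrite /P2 /c1 /c3 /closed_from0 /=.
have -> : ((k + m).+2 - k.+1 = m.+1)%N by lia.
rewrite !subn1 /= ifN; last lia.
congr (_ + _); apply: big_nat1_bsum; try lia; move=> i; rewrite /bweight.
  all: rewrite ?addn0 ?addn1 !subSS ?subn0 ?subn1 ?subnS exprMn !exprS; ring.
Qed.

End TwoStateChain.

Theorem theorem1 (R : realFieldType) (p0 p1 p00 p01 p10 p11 : R) (N k : nat) :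
  (1 <= N)%N ->
  0 <= p0 -> 0 <= p1 -> p0 + p1 = 1 ->
  0 <= p00 -> 0 <= p01 -> 0 <= p10 -> 0 <= p11 ->
  p00 + p01 = 1 -> p10 + p11 = 1 ->
  (k <= N)%N ->
  prob_N1 p0 p1 p00 p01 p10 p11 N k =
    p1 * P1 p00 p01 p10 p11 k N + p0 * P2 p00 p01 p10 p11 k N.
Proof.
move=> N_gt0 _ _ _ _ _ _ _ _ _ le_kN.
case: N N_gt0 le_kN => // n _ le_kn; rewrite prob_N1_visit_prob.
case: k le_kn => [|k] le_kn.
  by rewrite /P1 /P2 /= visit_prob_false0 subn1 mulr0 add0r.
have [-> | ne_kn] := eqVneq k n.
  by rewrite /P1 /P2 /= eqxx visit_prob_truenn visit_prob_gt // subn1 mulr0 addr0.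
have [m ->] : exists m, n = (k + m).+1 by exists (n - k.+1)%N; lia.
have [from1 from0] := visit_prob_closed p00 p01 p10 p11 (k + m) k.
by rewrite from1 // from0 // P1_closed P2_closed.
Qed.
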